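(* Let $\sum_i\lambda_i[\alpha_i][\beta_i]=0$ be a homogeneous Plücker relation on $t$-minors of degree $v$. Then for every $m\times n$ matrix $X$, every $t\times m$ matrix $A$ and every multiset $u$ of elements of $\{1,\dots,m\}$ of cardinality $2t$ one has $$\sum_c[c]_A\,[c']_A\sum_i\lambda_i\,[c\,|\,\alpha_i]_X\,[c'\,|\,\beta_i]_X=0,$$ where $c$ ranges over all strictly increasing sequences of length $t$ contained in $u$ (as sub-multisets) and $c'=u\setminus c$ (multiset difference).
   Context: A Plücker relation on $t$-minors is a relation $\sum_i\lambda_i[\alpha_i][\beta_i]=0$ with $\lambda_i\in\mathbb Z$, valid for the maximal minors of the generic $t\times n$ matrix, where $\alpha_i,\beta_i$ are increasing sequences of length $t$ in $\{1,\dots,n\}$ and $[\alpha]$ is the maximal minor with column indices $\alpha$. It is homogeneous of degree $v$ if the multiset union $\alpha_i\cup\beta_i$ equals the multiset $v$ for all $i$. For a $t\times m$ matrix $A$, $[c]_A$ is the maximal minor of $A$ with column indices $c$ (zero if $c$ has repeated entries), and $[c\,|\,\alpha]_X$ is the minor of $X$ with row indices $c$ and column indices $\alpha$. Matrices have entries in a commutative ring (e.g. a field $K$). *)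

From HB Require Import structures.
From mathcomp Require Import all_boot all_order all_algebra.
From mathcomp Require Export mpoly.
Set Implicit Arguments. Unset Strict Implicit. Unset Printing Implicit Defensive.
Import Order.TTheory GRing.Theory Num.Theory.
Local Open Scope ring_scope.

(* Index sets {1,...,n} are rendered as 'I_n (0-based). Sequences of indices
   are [seq 'I_n]; a sequence of length t is read entrywise with [onth]
   (an out-of-range entry, which never occurs in the statement, gives 0). *)

Definition minor (R : pzRingType) (t p q : nat) (X : 'M[R]_(p, q))
    (r : seq 'I_p) (s : seq 'I_q) : R :=
  \det (\matrix_(i < t, j < t)
          match onth r i, onth s j with
          | Some a, Some b => X a b
          | _, _ => 0
          end).

Definition maxminor (R : pzRingType) (t m : nat) (A : 'M[R]_(t, m))
    (c : seq 'I_m) : R :=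
  minor t A (enum 'I_t) c.

Definition generic_mx (t n : nat) : 'M[{mpoly int[t * n]}]_(t, n) :=
  \matrix_(i < t, j < n) 'X_(mxvec_index i j).

Definition mdiff (T : eqType) (s r : seq T) : seq T :=
  foldl (fun acc x => rem x acc) s r.

Definition plucker_relation (t n k : nat) (lam : 'I_k -> int)
    (alpha beta : 'I_k -> t.-tuple 'I_n) : Prop :=
  (forall i, sorted (fun x y : 'I_n => (x < y)%N) (alpha i)
             /\ sorted (fun x y : 'I_n => (x < y)%N) (beta i)) /\
  \sum_(i < k) (lam i)%:~R * maxminor (generic_mx t n) (alpha i)
                           * maxminor (generic_mx t n) (beta i) = 0.

Definition plucker_homogeneous (t n k : nat) (alpha beta : 'I_k -> t.-tuple 'I_n)
    (v : seq 'I_n) : Prop :=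
  forall i, perm_eq (val (alpha i) ++ val (beta i)) v.

From HB Require Import structures.
From mathcomp Require Import all_boot all_order all_algebra all_fingroup.
From mathcomp Require Import ring.
Import GRing.Theory.
Local Open Scope ring_scope.
Set Implicit Arguments. Unset Strict Implicit. Unset Printing Implicit Defensive.

(* Specialise the Plücker relation to the t x n matrix Y = A diag(x_1..x_m) X
   over R[x_1..x_m]. Expanding multilinearly, [a]_Y is the sum over all
   t-tuples f of [f]_A * prod_j X(f_j, a_j) * x^f, so the coefficient of x^u
   in the relation is a sum over pairs of t-tuples (f, g) with f ++ g a
   rearrangement of u. Grouping the tuples f and g by their increasing
   rearrangements c and c' = u \ c, and recognising the Leibniz expansion of
   [c | alpha]_X, gives exactly the stated sum. *)

Section PermTuple.
Variables (T : finType) (t : nat).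

Definition perm_tuple (s : 'S_t) (c : t.-tuple T) : t.-tuple T :=
  [tuple tnth c (s i) | i < t].

Lemma perm_eq_perm_tuple s c : perm_eq (perm_tuple s c) c.
Proof. by apply/tuple_permP; exists s. Qed.

Lemma perm_tuple_inj (c : t.-tuple T) : uniq c -> injective (perm_tuple^~ c).
Proof.
move=> Uc s1 s2 /(congr1 (fun f : t.-tuple T => tnth f)) E.
apply/permP => i; have := congr1 (fun f => f i) E.
by rewrite /= !tnth_mktuple => /(tuple_uniqP _ Uc).
Qed.

Lemma big_perm_eq_tuple (V : zmodType) (F : t.-tuple T -> V) (c : t.-tuple T) :
    (forall f : t.-tuple T, ~~ uniq f -> F f = 0) ->
  \sum_(f : t.-tuple T | perm_eq f c) F f = \sum_(s : 'S_t) F (perm_tuple s c).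
Proof.
move=> F0; have [Uc|NUc] := boolP (uniq c); last first.
  rewrite !big1 // => [s _|f Hf]; apply: F0.
    by rewrite (perm_uniq (perm_eq_perm_tuple s c)).
  by rewrite (perm_uniq Hf).
rewrite (eq_bigr (fun s => \sum_(f | f == perm_tuple s c) F f)); last first.
  by move=> s _; rewrite big_pred1_eq.
rewrite (exchange_big_dep xpredT) //= [LHS]big_mkcond; apply: eq_bigr => f _.
case: ifP => Hf.
  have [s0 Es0] := tuple_permP Hf.
  have {}Es0 : f = perm_tuple s0 c by apply: val_inj.
  rewrite (big_pred1 s0) // => s /=; rewrite Es0.
  by apply/eqP/eqP => [/perm_tuple_inj -> | ->].
rewrite big_pred0 // => s /=; apply/negP => /eqP E.
by move: Hf; rewrite E perm_eq_perm_tuple.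
Qed.

End PermTuple.

Lemma perm_eq_mdiff (T : eqType) (c u : seq T) :
  uniq c -> all (fun x => x \in u) c -> perm_eq u (c ++ mdiff u c).
Proof.
elim: c u => [|x c IH] u /=; first by rewrite /mdiff perm_refl.
case/andP=> xc Uc /andP[xu cu]; have ux := perm_to_rem xu.
have cu' : all (fun y => y \in rem x u) c.
  apply/allP => y yc; move: (allP cu y yc); rewrite (perm_mem ux) inE.
  by case/orP => // /eqP yx; move: xc; rewrite -yx yc.
by apply: (perm_trans ux); rewrite perm_cons; apply: IH.
Qed.

Section OrdinalTuples.
Variables (m t : nat).
Local Notation ltI := (fun x y : 'I_m => (x < y)%N).
Local Notation leI := (fun x y : 'I_m => (x <= y)%N).

Lemma ord_ltn_sorted_uniq_leq (s : seq 'I_m) :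
  sorted ltI s = uniq s && sorted leI s.
Proof.
have -> : sorted ltI s = sorted ltn (map val s) by rewrite sorted_map.
have -> : sorted leI s = sorted leq (map val s) by rewrite sorted_map.
by rewrite ltn_sorted_uniq_leq (map_inj_uniq val_inj).
Qed.

Lemma ord_ltn_sorted_eq (s1 s2 : seq 'I_m) :
  sorted ltI s1 -> sorted ltI s2 -> perm_eq s1 s2 -> s1 = s2.
Proof.
apply: sorted_eq => [x y z /= | x y /andP[xy yx]]; first exact: ltn_trans.
by have := ltn_trans xy yx; rewrite ltnn.
Qed.

Lemma ord_sort_leq_ltn_sorted (s : seq 'I_m) : uniq s -> sorted ltI (sort leI s).
Proof.
move=> Us; rewrite ord_ltn_sorted_uniq_leq sort_uniq Us /=.
by apply: sort_sorted => x y; apply: leq_total.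
Qed.

(* Every tuple without repetition is a unique rearrangement of a unique increasing one. *)
Lemma big_tuple_by_sorted (V : zmodType) (F : t.-tuple 'I_m -> V)
    (Q : pred (t.-tuple 'I_m)) :
    (forall f : t.-tuple 'I_m, ~~ uniq f -> F f = 0) ->
    (forall f g : t.-tuple 'I_m, perm_eq f g -> Q f = Q g) ->
  \sum_(f | Q f) F f
    = \sum_(c : t.-tuple 'I_m | sorted ltI c && Q c) \sum_(s : 'S_t) F (perm_tuple s c).
Proof.
move=> F0 permQ.
under [RHS]eq_bigr => c _ do rewrite -(big_perm_eq_tuple _ F0).
rewrite (exchange_big_dep xpredT) //= [LHS]big_mkcond; apply: eq_bigr => f _.
have [Uf|NUf] := boolP (uniq f); last first.
  by rewrite F0 // big1 ?if_same // => c _; rewrite F0.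
pose c0 := sort_tuple leI f.
have c0f : perm_eq c0 f by apply: permEl; apply: perm_sort.
have c0E (c : t.-tuple 'I_m) : (sorted ltI c && Q c && perm_eq f c) = (c == c0) && Q f.
  apply/idP/idP => [/andP[/andP[Sc Qc] fc] | /andP[/eqP -> Qf]].
    rewrite (permQ _ _ fc) Qc andbT; apply/eqP/val_inj/ord_ltn_sorted_eq => //.
      exact: ord_sort_leq_ltn_sorted.
    by rewrite perm_sym (perm_trans c0f fc).
  by rewrite ord_sort_leq_ltn_sorted //= (permQ _ f) // Qf perm_sym c0f.
rewrite (eq_bigl _ _ c0E); case: ifP => Qf.
  by rewrite (big_pred1 c0) // => c /=; rewrite andbT.
by rewrite big_pred0 // => c; rewrite andbF.
Qed.

Variable u : seq 'I_m.
Hypothesis size_u : size u = (2 * t)%N.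

(* The complementary tuple c' = u \ c, sorted; [insubd] only matters when
   c is not contained in u, where c' is never used. *)
Definition compl_tuple (c : t.-tuple 'I_m) : t.-tuple 'I_m :=
  insubd c (sort leI (mdiff u c)).

Lemma compl_tupleE (c : t.-tuple 'I_m) :
  uniq c -> all (fun x => x \in u) c -> val (compl_tuple c) = sort leI (mdiff u c).
Proof.
move=> Uc cu; apply: insubdK; rewrite unfold_in size_sort.
move/perm_size: (perm_eq_mdiff Uc cu); rewrite size_cat size_tuple size_u.
by rewrite mul2n -addnn => /addnI <-.
Qed.

Lemma perm_eq_compl_tuple (c : t.-tuple 'I_m) :
  uniq c -> all (fun x => x \in u) c -> perm_eq (compl_tuple c) (mdiff u c).
Proof. by move=> Uc cu; rewrite compl_tupleE // perm_sort. Qed.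

Lemma big_pairs_perm_eq (V : zmodType) (F : t.-tuple 'I_m -> t.-tuple 'I_m -> V) :
    (forall f g : t.-tuple 'I_m, ~~ uniq f -> F f g = 0) ->
    (forall f g : t.-tuple 'I_m, ~~ uniq g -> F f g = 0) ->
  \sum_(f : t.-tuple 'I_m) \sum_(g : t.-tuple 'I_m | perm_eq (f ++ g) u) F f g
    = \sum_(c : t.-tuple 'I_m | sorted ltI c && all (fun x => x \in u) c)
        \sum_(s : 'S_t) \sum_(s' : 'S_t)
          F (perm_tuple s c) (perm_tuple s' (compl_tuple c)).
Proof.
move=> F0l F0r; pose Qu (f : t.-tuple 'I_m) := all (fun x => x \in u) f.
have outside_u f : ~~ Qu f -> \sum_(g : t.-tuple 'I_m | perm_eq (f ++ g) u) F f g = 0.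
  move=> Nf; rewrite big_pred0 // => g; apply/negP => fgu; move/negP: Nf; apply.
  by apply/allP => x xf; rewrite -(perm_mem fgu) mem_cat xf.
rewrite -(@big_rmcond _ _ _ _ _ Qu _ outside_u) big_tuple_by_sorted; last 2 first.
- by move=> f Nf; rewrite big1 // => g _; apply: F0l.
- by move=> f g fg; apply: perm_all.
apply: eq_bigr => c /andP[Sc cu]; apply: eq_bigr => s _.
have Uc : uniq c by move: Sc; rewrite ord_ltn_sorted_uniq_leq => /andP[].
rewrite -big_perm_eq_tuple; last exact: F0r.
apply: eq_bigl => g.
rewrite (permPr (perm_eq_mdiff Uc cu)) (permPr (perm_eq_compl_tuple Uc cu)).
by rewrite (permPl (perm_cat (perm_eq_perm_tuple s c) (perm_refl g))) perm_cat2l.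
Qed.

End OrdinalTuples.

Section Minors.
Variables (R : comNzRingType) (t : nat).

Lemma onth_tuple (T : Type) (f : t.-tuple T) (i : 'I_t) : onth f i = Some (tnth f i).
Proof. by rewrite onthE (nth_map (tnth f i)) ?size_tuple // -tnth_nth. Qed.

Lemma onth_enum_ord (i : 'I_t) : onth (enum 'I_t) i = Some i.
Proof. by rewrite onthE (nth_map i) ?size_enum_ord // nth_ord_enum. Qed.

Lemma minor_tuple p q (X : 'M[R]_(p, q)) (c : t.-tuple 'I_p) (a : t.-tuple 'I_q) :
  minor t X c a = \det (\matrix_(i, j) X (tnth c i) (tnth a j)).
Proof. by congr (\det _); apply/matrixP => i j; rewrite !mxE !onth_tuple. Qed.

Lemma maxminor_tuple m (A : 'M[R]_(t, m)) (c : t.-tuple 'I_m) :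
  maxminor A c = \det (\matrix_(i, j) A i (tnth c j)).
Proof.
by congr (\det _); apply/matrixP => i j; rewrite !mxE onth_enum_ord onth_tuple.
Qed.

Lemma maxminor_perm_tuple m (A : 'M[R]_(t, m)) (c : t.-tuple 'I_m) s :
  maxminor A (perm_tuple s c) = (-1) ^+ s * maxminor A c.
Proof.
rewrite !maxminor_tuple.
have -> : \matrix_(i, j) A i (tnth (perm_tuple s c) j)
          = col_perm s (\matrix_(i, j) A i (tnth c j)).
  by apply/matrixP => i j; rewrite !mxE tnth_mktuple.
by rewrite col_permE det_mulmx det_perm odd_permV mulrC.
Qed.

Lemma maxminor_nonuniq m (A : 'M[R]_(t, m)) (c : t.-tuple 'I_m) :
  ~~ uniq c -> maxminor A c = 0.
Proof.
move=> NUc; rewrite maxminor_tuple -det_tr.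
have : ~~ injectiveb (tnth c).
  by apply/injectiveP => /tuple_uniqP; rewrite (negbTE NUc).
case/injectivePn => i [j ij Eij].
by apply: (determinant_alternate ij) => l; rewrite !mxE Eij.
Qed.

Definition entry_prod p q (X : 'M[R]_(p, q)) (c : t.-tuple 'I_p) (a : t.-tuple 'I_q) :=
  \prod_j X (tnth c j) (tnth a j).

(* Leibniz expansion of [c | a]_X over the permutations of the rows, each
   sign absorbed into [c]_A. *)
Lemma maxminor_mul_minor m q (A : 'M[R]_(t, m)) (X : 'M[R]_(m, q))
    (c : t.-tuple 'I_m) (a : t.-tuple 'I_q) :
  maxminor A c * minor t X c a
    = \sum_(s : 'S_t) maxminor A (perm_tuple s c) * entry_prod X (perm_tuple s c) a.
Proof.
rewrite minor_tuple -det_tr /determinant mulr_sumr; apply: eq_bigr => s _.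
rewrite maxminor_perm_tuple /entry_prod mulrCA mulrA; congr (_ * _).
by apply: eq_bigr => i _; rewrite !mxE tnth_mktuple.
Qed.

End Minors.

Lemma plucker_relation_maxminor t n k (lam : 'I_k -> int)
    (alpha beta : 'I_k -> t.-tuple 'I_n) (S : comNzRingType) (Y : 'M[S]_(t, n)) :
    plucker_relation lam alpha beta ->
  \sum_(i < k) (lam i)%:~R * maxminor Y (alpha i) * maxminor Y (beta i) = 0.
Proof.
case=> _ rel; pose w l := mxvec Y 0 l.
pose ev : {rmorphism {mpoly int[t * n]} -> S} := mmap (intmul (1 : S)) w.
have ev_maxminor (c : seq 'I_n) : ev (maxminor (generic_mx t n) c) = maxminor Y c.
  rewrite /maxminor /minor -det_map_mx; congr (\det _).
  apply/matrixP => i j; rewrite !mxE.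
  case: (onth _ i) => [a|]; case: (onth c j) => [b|]; rewrite ?rmorph0 //.
  by rewrite mxE /ev /= (@mmapX _ _ _ w intr) mmap1U /w mxvecE.
have := congr1 ev rel; rewrite rmorph_sum rmorph0 => ev_rel; rewrite -[RHS]ev_rel.
by apply: eq_bigr => i _; rewrite !rmorphM rmorph_int !ev_maxminor.
Qed.

Lemma big_ffun_tuple (V : zmodType) (T : finType) (t : nat) (G : {ffun 'I_t -> T} -> V) :
  \sum_(h : {ffun 'I_t -> T}) G h = \sum_(f : t.-tuple T) G [ffun j => tnth f j].
Proof.
rewrite (reindex (fun f : t.-tuple T => [ffun j => tnth f j])) //.
exists (fun h : {ffun 'I_t -> T} => [tuple h j | j < t]) => [f _|h _].
  by apply: eq_from_tnth => j; rewrite tnth_mktuple ffunE.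
by apply/ffunP => j; rewrite ffunE tnth_mktuple.
Qed.

(* The multilinear expansion behind Cauchy-Binet, before discarding the
   selections f with repeated columns. *)
Lemma det_mulmx_tuple (S : comNzRingType) t m (B : 'M[S]_(t, m)) (M : 'M[S]_(m, t)) :
  \det (B *m M) = \sum_(f : t.-tuple 'I_m)
     (\prod_j M (tnth f j) j) * \det (\matrix_(i, j) B i (tnth f j)).
Proof.
under [RHS]eq_bigr => f _ do rewrite -det_tr.
rewrite -[LHS]det_tr /determinant.
rewrite (eq_bigr (fun s : 'S_t => \sum_(h : {ffun 'I_t -> 'I_m})
   (-1) ^+ s * ((\prod_i M (h i) i) * \prod_i B (s i) (h i)))); last first.
  move=> s _; rewrite -mulr_sumr; congr (_ * _).
  rewrite (eq_bigr (fun i => \sum_l B (s i) l * M l i)); last first.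
    by move=> i _; rewrite !mxE.
  rewrite bigA_distr_bigA; apply: eq_bigr => h _.
  by rewrite -big_split /=; apply: eq_bigr => i _; rewrite mulrC.
rewrite exchange_big big_ffun_tuple; apply: eq_bigr => f _.
rewrite mulr_sumr; apply: eq_bigr => s _.
rewrite mulrCA; congr (_ * (_ * _)).
  by apply: eq_bigr => i _; rewrite ffunE.
by apply: eq_bigr => i _; rewrite !mxE ffunE.
Qed.

Definition mnm_seq m (s : seq 'I_m) : 'X_{1..m} := (\sum_(x <- s) U_(x))%MM.

Lemma mnm_seq_cat m (s1 s2 : seq 'I_m) : mnm_seq (s1 ++ s2) = (mnm_seq s1 + mnm_seq s2)%MM.
Proof. by rewrite /mnm_seq big_cat. Qed.

Lemma eq_mnm_seq m (s1 s2 : seq 'I_m) : (mnm_seq s1 == mnm_seq s2) = perm_eq s1 s2.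
Proof.
apply/eqP/idP => [E|s12]; last exact: perm_big.
have mnm_seqE s x : mnm_seq s x = count_mem x s.
  rewrite /mnm_seq mnm_sumE -sum1_count [RHS]big_mkcond /=.
  by apply: eq_bigr => y _; rewrite mnm1E; case: (y == x).
by apply/allP => x _; apply/eqP; rewrite -!mnm_seqE E.
Qed.

Section TwistedMatrix.
Variables (R : comNzRingType) (t n m : nat) (A : 'M[R]_(t, m)) (X : 'M[R]_(m, n)).

Definition twisted_mx : 'M[{mpoly R[m]}]_(t, n) :=
  \matrix_(i, l) ((A i l)%:MP * 'X_l) *m map_mx (@mpolyC m R) X.

Lemma maxminor_twisted_mx (a : t.-tuple 'I_n) :
  maxminor twisted_mx a
    = \sum_(f : t.-tuple 'I_m) (maxminor A f * entry_prod X f a)%:MP * 'X_[mnm_seq f].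
Proof.
rewrite maxminor_tuple.
have -> : \matrix_(i, j) twisted_mx i (tnth a j)
          = \matrix_(i, l) ((A i l)%:MP * 'X_l) *m \matrix_(l, j) (X l (tnth a j))%:MP.
  by apply/matrixP => i j; rewrite !mxE; apply: eq_bigr => l _; rewrite !mxE.
rewrite det_mulmx_tuple; apply: eq_bigr => f _.
have -> : \matrix_(i, j) (\matrix_(i, l) ((A i l)%:MP * 'X_l)) i (tnth f j)
          = map_mx (@mpolyC m R) (\matrix_(i, j) A i (tnth f j))
              *m diag_mx (\row_j 'X_(tnth f j)).
  by rewrite mul_mx_diag; apply/matrixP => i j; rewrite !mxE.
rewrite det_mulmx det_map_mx det_diag -maxminor_tuple rmorphM /=.
have -> : \prod_i (\row_j 'X_(tnth f j) : 'rV[{mpoly R[m]}]_t) 0 i = 'X_[mnm_seq f].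
  rewrite /mnm_seq (big_morph _ (@mpolyXD m R) (mpolyX0 m R)) big_tuple.
  by apply: eq_bigr => i _; rewrite mxE.
rewrite /entry_prod rmorph_prod /=; under eq_bigr do rewrite mxE.
by rewrite mulrCA mulrA.
Qed.

Variables (k : nat) (lam : 'I_k -> int) (alpha beta : 'I_k -> t.-tuple 'I_n).

Definition pair_term (f g : t.-tuple 'I_m) : R :=
  maxminor A f * maxminor A g *
    \sum_(i < k) (lam i)%:~R * entry_prod X f (alpha i) * entry_prod X g (beta i).

Lemma pair_term_nonuniql (f g : t.-tuple 'I_m) : ~~ uniq f -> pair_term f g = 0.
Proof. by move=> NUf; rewrite /pair_term maxminor_nonuniq // !mul0r. Qed.

Lemma pair_term_nonuniqr (f g : t.-tuple 'I_m) : ~~ uniq g -> pair_term f g = 0.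
Proof. by move=> NUg; rewrite /pair_term (maxminor_nonuniq A NUg) mulr0 mul0r. Qed.

Lemma plucker_term_expand (c d : t.-tuple 'I_m) :
  maxminor A c * maxminor A d *
      \sum_(i < k) (lam i)%:~R * minor t X c (alpha i) * minor t X d (beta i)
    = \sum_(s : 'S_t) \sum_(s' : 'S_t) pair_term (perm_tuple s c) (perm_tuple s' d).
Proof.
have expand_i i : maxminor A c * maxminor A d
                    * ((lam i)%:~R * minor t X c (alpha i) * minor t X d (beta i))
    = \sum_(s : 'S_t) \sum_(s' : 'S_t) (lam i)%:~R
        * (maxminor A (perm_tuple s c) * entry_prod X (perm_tuple s c) (alpha i))
        * (maxminor A (perm_tuple s' d) * entry_prod X (perm_tuple s' d) (beta i)).
  transitivity ((lam i)%:~R * (maxminor A c * minor t X c (alpha i))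
                  * (maxminor A d * minor t X d (beta i))); first by ring.
  rewrite !maxminor_mul_minor -mulrA big_distrlr mulr_sumr.
  by apply: eq_bigr => s _; rewrite mulr_sumr; apply: eq_bigr => s' _; rewrite /= mulrA.
rewrite mulr_sumr (eq_bigr _ (fun i _ => expand_i i)) exchange_big.
apply: eq_bigr => s _; rewrite exchange_big; apply: eq_bigr => s' _.
by rewrite /pair_term mulr_sumr; apply: eq_bigr => i _; ring.
Qed.

Hypothesis plucker : plucker_relation lam alpha beta.

(* The coefficient of x^u in the Plücker relation for [twisted_mx]. *)
Lemma sum_pair_terms_perm_eq (u : seq 'I_m) :
  \sum_(f : t.-tuple 'I_m) \sum_(g : t.-tuple 'I_m | perm_eq (f ++ g) u) pair_term f g = 0.
Proof.
have expand : \sum_(i < k) (lam i)%:~R * maxminor twisted_mx (alpha i)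
                                     * maxminor twisted_mx (beta i)
    = \sum_(f : t.-tuple 'I_m) \sum_(g : t.-tuple 'I_m)
        (pair_term f g)%:MP * 'X_[(mnm_seq f + mnm_seq g)%MM].
  under eq_bigr => i _ do rewrite !maxminor_twisted_mx -mulrA big_distrlr /= mulr_sumr.
  rewrite exchange_big; apply: eq_bigr => f _.
  under eq_bigr => i _ do rewrite mulr_sumr.
  rewrite exchange_big; apply: eq_bigr => g _.
  rewrite /pair_term mpolyXD mulr_sumr rmorph_sum /= mulr_suml; apply: eq_bigr => i _.
  by rewrite !rmorphM rmorph_int /=; ring.
have := congr1 (mcoeff (mnm_seq u)) (plucker_relation_maxminor twisted_mx plucker).
rewrite expand raddf0 raddf_sum => coef_u; rewrite -[RHS]coef_u.
apply: eq_bigr => f _; rewrite raddf_sum [LHS]big_mkcond; apply: eq_bigr => g _.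
by rewrite /= mcoeffCM mcoeffX -mnm_seq_cat eq_mnm_seq; case: ifP; rewrite ?mulr1 ?mulr0.
Qed.

End TwistedMatrix.

Unset Implicit Arguments.

Theorem lemma6p2 (t n k : nat) (lam : 'I_k -> int)
    (alpha beta : 'I_k -> t.-tuple 'I_n) (v : seq 'I_n)
    (Hpl : plucker_relation lam alpha beta)
    (Hhom : plucker_homogeneous alpha beta v)
    (R : comNzRingType) (m : nat) (X : 'M[R]_(m, n)) (A : 'M[R]_(t, m))
    (u : seq 'I_m) (Hu : size u = (2 * t)%N) :
  \sum_(c : t.-tuple 'I_m |
          sorted (fun x y : 'I_m => (x < y)%N) c && all (fun x => x \in u) c)
     (let c' := sort (fun x y : 'I_m => (x <= y)%N) (mdiff u c) in
      maxminor A c * maxminor A c'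
      * \sum_(i < k) (lam i)%:~R * minor t X c (alpha i) * minor t X c' (beta i))
  = 0.
Proof.
rewrite -[RHS](sum_pair_terms_perm_eq A X Hpl u) (big_pairs_perm_eq Hu).
- apply: eq_bigr => c /andP[Sc cu].
  have Uc : uniq c by move: Sc; rewrite ord_ltn_sorted_uniq_leq => /andP[].
  by rewrite /= -(compl_tupleE Hu Uc cu) plucker_term_expand.
- exact: pair_term_nonuniql.
- exact: pair_term_nonuniqr.
Qed.
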